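(* For every positive integer $n$, with $M_m=2(m+1)H_m-4m$ for $m\ge 0$, $$\sum_{j=1}^{n}M_{j-1}M_{n-j}=4\sum_{j=1}^{n}jH_{j-1}(n-j+1)H_{n-j}-\frac{8}{3}n(n^2-1)H_{n+1}+\frac{44n}{9}(n^2-1).$$
   Context: $H_m=\sum_{k=1}^m 1/k$ denotes the $m$th harmonic number, with $H_0=0$. *)

From mathcomp Require Import all_boot all_order all_algebra.
Set Implicit Arguments. Unset Strict Implicit. Unset Printing Implicit Defensive.
Import Order.TTheory GRing.Theory Num.Theory.
Local Open Scope ring_scope.

Definition harmonic (R : numFieldType) (m : nat) : R :=
  \sum_(1 <= k < m.+1) (k%:R)^-1.

Definition Mseq (R : numFieldType) (m : nat) : R :=
  2 * (m.+1)%:R * harmonic R m - 4 * m%:R.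

From mathcomp Require Import all_boot all_order all_algebra ring.
Import Order.TTheory GRing.Theory Num.Theory.
Local Open Scope ring_scope.

(* With a = j - 1 and b = n - j, so that a + b = n - 1, and E_m = (m+1) H_m - m,
   M_a M_b = 4 (a+1) H_a (b+1) H_b - 8 b E_a - 8 a E_b.
   The two cross terms have the same sum by the symmetry a <-> b of the
   antidiagonal, and the convolution sum_(a+b=n-1) b E_a equals
   n (n^2-1)/6 H_(n+1) - 11 n (n^2-1)/36; this follows by induction on n from
   sum_(i<m) E_i = m (m+1)/2 (H_(m+1) - 3/2). *)

Ltac field_natr := field; rewrite -?natrD ?nat1r ?natr1 ?pnatr_eq0.

Lemma sum_antidiagonal_swap (V : nmodType) (F : nat -> nat -> V) n :
  \sum_(0 <= i < n) F i (n - i.+1)%N = \sum_(0 <= i < n) F (n - i.+1)%N i.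
Proof.
rewrite big_nat_rev; apply: eq_big_nat => i /andP[_ lt_in].
by rewrite add0n subnSK // subKn // ltnW.
Qed.

Section HarmonicSums.
Variable R : numFieldType.
Local Notation H := (harmonic R).

Lemma harmonicS m : H m.+1 = H m + (m.+1)%:R^-1.
Proof. by rewrite /harmonic big_nat_recr. Qed.

Lemma sum_harmonic_excess m :
  \sum_(0 <= i < m) (i.+1%:R * H i - i%:R) = m%:R * m.+1%:R / 2 * (H m.+1 - 3 / 2).
Proof.
elim: m => [|m IH]; first by rewrite big_geq // mul0r !mul0r.
by rewrite big_nat_recr //= IH !harmonicS; field_natr.
Qed.

Lemma sum_conv_harmonic_excess n :
  \sum_(0 <= i < n) (n - i.+1)%:R * (i.+1%:R * H i - i%:R)
  = n%:R * (n%:R ^+ 2 - 1) / 6 * H n.+1 - 11 / 36 * n%:R * (n%:R ^+ 2 - 1).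
Proof.
elim: n => [|n IH]; first by rewrite big_geq //; field_natr.
rewrite big_nat_recr //= subnn mul0r addr0.
under eq_big_nat => i /andP[_ lt_in] do rewrite subSn // mulrSr mulrDl mul1r.
by rewrite big_split /= IH sum_harmonic_excess !harmonicS; field_natr.
Qed.

Lemma Mseq_mul a b :
  Mseq R a * Mseq R b = 4 * (a.+1%:R * H a * b.+1%:R * H b)
                        - 8 * (b%:R * (a.+1%:R * H a - a%:R))
                        - 8 * (a%:R * (b.+1%:R * H b - b%:R)).
Proof. by rewrite /Mseq; ring. Qed.

End HarmonicSums.

(* The identity also holds for n = 0. *)
Theorem lemma3p2 (R : numFieldType) (n : nat) (hn : (0 < n)%N) :
  \sum_(1 <= j < n.+1) Mseq R (j.-1) * Mseq R (n - j)
  = 4 * \sum_(1 <= j < n.+1)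
          (j%:R * harmonic R (j.-1) * (n - j).+1%:R * harmonic R (n - j))
    - 8 / 3 * n%:R * (n%:R ^+ 2 - 1) * harmonic R n.+1
    + 44 * n%:R / 9 * (n%:R ^+ 2 - 1).
Proof.
rewrite !big_add1 /=.
under eq_bigr do rewrite Mseq_mul.
rewrite !sumrB -!mulr_sumr.
rewrite -(@sum_antidiagonal_swap _
            (fun a b => b%:R * (a.+1%:R * harmonic R a - a%:R))).
by rewrite sum_conv_harmonic_excess; field_natr.
Qed.
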